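(* Let $R$ be a locally bounded $K$-category, $X\in\mathrm{Mod}(R)$, $M,N\in\mathrm{mod}(R)$, and let $f:M\to N$ and $\alpha:X\to N$ be $R$-homomorphisms. Suppose that $\mathrm{Im}\,\mathrm{Hom}_R( *,\alpha)\subseteq\mathrm{Im}\,\mathrm{Hom}_R( *,f)$ as subfunctors of $\mathrm{Hom}_R( *,N)$ on $\mathrm{mod}(R)$, i.e. for every $L\in\mathrm{mod}(R)$ and every $R$-homomorphism $\gamma:L\to X$ there exists $h:L\to M$ with $\alpha\gamma=fh$. Then $\alpha$ factors through $f$, i.e. $\alpha=f\beta$ for some $R$-homomorphism $\beta:X\to M$.
   Context: $K$ is an algebraically closed field. A $K$-category $R$ is locally bounded if distinct objects are non-isomorphic, endomorphism algebras of objects are local, and for each object $x$, $\sum_y\dim_K R(x,y)<\infty$ and $\sum_y\dim_K R(y,x)<\infty$. An $R$-module is a $K$-linear functor $R^{op}\to\mathrm{Mod}(K)$; $\mathrm{Mod}(R)$ consists of $R$-modules $X$ with $\dim_K X(x)<\infty$ for all objects $x$, and $\mathrm{mod}(R)$ of those with $\sum_x\dim_K M(x)<\infty$. *)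

From HB Require Import structures.
From mathcomp Require Import all_boot all_algebra.
From Stdlib Require List.
Set Implicit Arguments. Unset Strict Implicit. Unset Printing Implicit Defensive.
Import GRing.Theory.
Local Open Scope ring_scope.

(* A K-linear category whose hom spaces are finite dimensional K-vector
   spaces (locally bounded categories have finite-dimensional hom spaces). *)
Record Kcat (K : fieldType) := {
  Obj : Type;
  Hom : Obj -> Obj -> vectType K;
  comp : forall x y z, Hom y z -> Hom x y -> Hom x z;
  idm : forall x, Hom x x;
  comp_assoc : forall x y z w (h : Hom z w) (g : Hom y z) (f : Hom x y),
    comp h (comp g f) = comp (comp h g) f;
  comp_id_l : forall x y (f : Hom x y), comp (idm y) f = f;
  comp_id_r : forall x y (f : Hom x y), comp f (idm x) = f;
  comp_lin_l : forall x y z (a : K) (g g' : Hom y z) (f : Hom x y),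
    comp (a *: g + g') f = a *: comp g f + comp g' f;
  comp_lin_r : forall x y z (a : K) (g : Hom y z) (f f' : Hom x y),
    comp g (a *: f + f') = a *: comp g f + comp g f'
}.

Arguments comp {K} k {x y z}.
Arguments idm {K} k x.
Arguments Hom {K} k.

Section Defs.
Variables (K : fieldType) (R : Kcat K).

Definition is_iso (x y : Obj R) (f : Hom R x y) : Prop :=
  exists g : Hom R y x, comp R g f = idm R x /\ comp R f g = idm R y.

Definition is_unit_end (x : Obj R) (a : Hom R x x) : Prop := is_iso a.

Definition local_end (x : Obj R) : Prop :=
  idm R x <> 0 /\
  (forall a b : Hom R x x, ~ is_unit_end a -> ~ is_unit_end b -> ~ is_unit_end (a + b)) /\
  (forall a r : Hom R x x, ~ is_unit_end a ->
      ~ is_unit_end (comp R r a) /\ ~ is_unit_end (comp R a r)).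

Definition locally_bounded : Prop :=
  (forall x y : Obj R, x <> y -> forall f : Hom R x y, ~ is_iso f) /\
  (forall x : Obj R, local_end x) /\
  (forall x : Obj R, exists s : seq (Obj R),
     forall y, (\dim {: Hom R x y} != 0)%N -> Stdlib.Lists.List.In y s) /\
  (forall x : Obj R, exists s : seq (Obj R),
     forall y, (\dim {: Hom R y x} != 0)%N -> Stdlib.Lists.List.In y s).

(* Objects of Mod(R): K-linear functors R^op -> Mod(K) with finite
   dimensional values. *)
Record Rmod := {
  sp : Obj R -> vectType K;
  act : forall x y, Hom R x y -> sp y -> sp x;
  act_comp : forall x y z (g : Hom R y z) (f : Hom R x y) (v : sp z),
    act (comp R g f) v = act f (act g v);
  act_id : forall x (v : sp x), act (idm R x) v = v;
  act_lin_v : forall x y (g : Hom R x y) (a : K) (v w : sp y),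
    act g (a *: v + w) = a *: act g v + act g w;
  act_lin_g : forall x y (g g' : Hom R x y) (a : K) (v : sp y),
    act (a *: g + g') v = a *: act g v + act g' v
}.

Arguments act r {x y}.

(* M is in mod(R): sum_x dim M(x) < oo *)
Definition fin_mod (M : Rmod) : Prop :=
  exists s : seq (Obj R), forall x, (\dim {: sp M x} != 0)%N -> Stdlib.Lists.List.In x s.

Definition is_hom (X Y : Rmod) (phi : forall x, sp X x -> sp Y x) : Prop :=
  (forall x (a : K) (v w : sp X x), phi x (a *: v + w) = a *: phi x v + phi x w) /\
  (forall x y (g : Hom R x y) (v : sp X y), phi x (act X g v) = act Y g (phi y v)).

End Defs.

(* Let T consist of the objects where N lives together with every y such that
   R(x, y) <> 0 for some x where M lives; T is finite since R is locally
   bounded and M, N are finite.  The submodule L of X generated by the spaces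
   X(t), t in T, is finite as well, because L(z) <> 0 forces R(z, t) <> 0 for
   some t in T.  The hypothesis applied to the inclusion L -> X yields
   h : L -> M with alpha = f h on L.  Then beta := h o pi, with pi the
   pointwise projection X(x) -> L(x), is the required factorization: pi is
   not natural, but it is at every R(x, y) that can be seen by M, since then
   L(y) = X(y), and alpha = f beta at every object where N lives since there
   L = X. *)
From Pilot Require Import Defs.
From mathcomp Require Import all_boot all_algebra.
Set Implicit Arguments. Unset Strict Implicit. Unset Printing Implicit Defensive.
Import GRing.Theory.
Local Open Scope ring_scope.

Local Notation ract X := (@act _ _ X _ _).

Section RmodLinear.
Variables (K : fieldType) (R : Kcat K) (X : Rmod R) (x y : Obj R).
Implicit Types (g : Defs.Hom R x y) (v : sp X y).

Lemma actDl g g' v : ract X (g + g') v = ract X g v + ract X g' v.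
Proof. by have := act_lin_g g g' 1 v; rewrite !scale1r. Qed.

Lemma act0l v : ract X (0 : Defs.Hom R x y) v = 0.
Proof. by apply: (@addIr _ (ract X 0 v)); rewrite -actDl !add0r. Qed.

Lemma actZl a g v : ract X (a *: g) v = a *: ract X g v.
Proof. by have := @act_lin_g _ _ X _ _ g 0 a v; rewrite !addr0 act0l addr0. Qed.

Lemma actDr g v w : ract X g (v + w) = ract X g v + ract X g w.
Proof. by have := @act_lin_v _ _ X _ _ g 1 v w; rewrite !scale1r. Qed.

Lemma act0r g : ract X g 0 = 0.
Proof. by apply: (@addIr _ (ract X g 0)); rewrite -actDr !add0r. Qed.

Lemma actZr a g v : ract X g (a *: v) = a *: ract X g v.
Proof. by have := @act_lin_v _ _ X _ _ g a v 0; rewrite !addr0 act0r addr0. Qed.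

Lemma act_suml I r (P : pred I) (F : I -> Defs.Hom R x y) v :
  ract X (\sum_(i <- r | P i) F i) v = \sum_(i <- r | P i) ract X (F i) v.
Proof. by elim/big_rec2: _ => [|i a b _ <-]; rewrite ?act0l ?actDl. Qed.

Lemma act_sumr g I r (P : pred I) (F : I -> sp X y) :
  ract X g (\sum_(i <- r | P i) F i) = \sum_(i <- r | P i) ract X g (F i).
Proof. by elim/big_rec2: _ => [|i a b _ <-]; rewrite ?act0r ?actDr. Qed.

End RmodLinear.

Lemma hom0 (K : fieldType) (R : Kcat K) (X Y : Rmod R)
    (phi : forall x, sp X x -> sp Y x) :
  is_hom phi -> forall x, phi x 0 = 0.
Proof.
move=> [phi_lin _] x; apply: (@addIr _ (phi x 0)).
by have := phi_lin x 1 0 0; rewrite !scale1r !addr0 add0r => <-.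
Qed.

Lemma dim0_all_eq (K : fieldType) (vT : vectType K) (u v : vT) :
  \dim {: vT} = 0%N -> u = v.
Proof.
by move/eqP; rewrite dimv_eq0 => /eqP vT0; move: (memvf u) (memvf v);
  rewrite vT0 !memv0 => /eqP-> /eqP->.
Qed.

Lemma dim_subvs (K : fieldType) (vT : vectType K) (U : {vspace vT}) :
  \dim {: subvs_of U} = \dim U.
Proof. by rewrite dimvf. Qed.

Lemma In_cover_union (A : Type) (P : A -> A -> Prop) :
    (forall x, exists s, forall y, P x y -> List.In y s) ->
  forall S : seq A, exists s, forall x, List.In x S -> forall y, P x y -> List.In y s.
Proof.
move=> Pfin; elim=> [|x S [s2 cover2]]; first by exists [::].
have [s1 cover1] := Pfin x; exists (s1 ++ s2) => x' [<-|Sx'] y Pxy.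
- exact/List.in_or_app/or_introl/cover1.
- exact/List.in_or_app/or_intror/(cover2 x').
Qed.

Section GeneratedSubmodule.
Variables (K : fieldType) (R : Kcat K) (X : Rmod R) (T : seq (Obj R)).

Definition submod_gens z : seq (sp X z) :=
  flatten [seq [seq ract X b u | b <- (vbasis {: Defs.Hom R z t} : seq _),
                                 u <- (vbasis {: sp X t} : seq _)] | t <- T].

Definition submod_space z : {vspace sp X z} := <<submod_gens z>>%VS.

Lemma submod_gensP z w :
  reflect (exists t (b : Defs.Hom R z t) u,
             [/\ List.In t T, b \in (vbasis fullv : seq _),
                 u \in (vbasis fullv : seq _) & w = ract X b u])
          (w \in submod_gens z).
Proof.
rewrite /submod_gens; elim: T => [|t T' IH] /=; first by right=> [[? [? [? []]]]].
rewrite mem_cat; apply: (iffP orP) => [[/allpairsP[[b u] [/= bb bu ->]] | /IH]|].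
- by exists t, b, u; split=> //; left.
- by move=> [t' [b [u [T't' bb bu ->]]]]; exists t', b, u; split=> //; right.
move=> [t' [b [u [[tt'|T't'] bb bu wE]]]]; first by left; subst; apply: allpairs_f.
by right; apply/IH; exists t', b, u.
Qed.

Lemma act_in_submod z t (k : Defs.Hom R z t) u :
  List.In t T -> ract X k u \in submod_space z.
Proof.
move=> Tt; rewrite (coord_vbasis (memvf k)) (coord_vbasis (memvf u)) act_suml.
apply: memv_suml => i _; rewrite actZl act_sumr; apply: rpredZ.
apply: memv_suml => j _; rewrite actZr; apply/rpredZ/memv_span/submod_gensP.
by exists t, (vbasis fullv)`_i, (vbasis fullv)`_j; split; rewrite ?mem_nth ?size_tuple.
Qed.

Lemma submod_full t u : List.In t T -> u \in submod_space t.
Proof. by move=> Tt; rewrite -(@act_id _ _ X _ u); apply: act_in_submod. Qed.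

Lemma submod_act_closed z x (g : Defs.Hom R z x) w :
  w \in submod_space x -> ract X g w \in submod_space z.
Proof.
move=> /(@coord_span _ _ _ (in_tuple (submod_gens x)))->.
rewrite act_sumr; apply: memv_suml => i _; rewrite actZr; apply: rpredZ.
have /submod_gensP[t [b [u [Tt _ _ ->]]]] : (submod_gens x)`_i \in submod_gens x.
  by rewrite mem_nth.
by rewrite -act_comp act_in_submod.
Qed.

Definition submod_act x y (g : Defs.Hom R x y) (v : subvs_of (submod_space y)) :
    subvs_of (submod_space x) :=
  vsproj (submod_space x) (ract X g (vsval v)).

Lemma submod_actE x y (g : Defs.Hom R x y) v :
  vsval (submod_act g v) = ract X g (vsval v).
Proof. by rewrite vsprojK // submod_act_closed ?subvsP. Qed.

Lemma submod_act_comp x y z (g : Defs.Hom R y z) (f : Defs.Hom R x y) v :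
  submod_act (Defs.comp R g f) v = submod_act f (submod_act g v).
Proof. by apply: subvs_inj; rewrite !submod_actE act_comp. Qed.

Lemma submod_act_id x v : submod_act (idm R x) v = v.
Proof. by apply: subvs_inj; rewrite submod_actE act_id. Qed.

Lemma submod_act_lin_v x y (g : Defs.Hom R x y) a v w :
  submod_act g (a *: v + w) = a *: submod_act g v + submod_act g w.
Proof. by apply: subvs_inj; rewrite !linearP /= !submod_actE act_lin_v. Qed.

Lemma submod_act_lin_g x y (g g' : Defs.Hom R x y) a v :
  submod_act (a *: g + g') v = a *: submod_act g v + submod_act g' v.
Proof. by apply: subvs_inj; rewrite linearP /= !submod_actE act_lin_g. Qed.

Definition submod : Rmod R :=
  Build_Rmod submod_act_comp submod_act_id submod_act_lin_v submod_act_lin_g.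

Lemma submod_incl_hom : is_hom (fun z (v : sp submod z) => vsval v).
Proof.
by split=> [z a v w | z y g v]; rewrite ?linearP //= submod_actE.
Qed.

Lemma submod_proj_id x v : List.In x T -> vsval (vsproj (submod_space x) v) = v.
Proof. by move=> Tx; rewrite vsprojK ?submod_full. Qed.

Lemma submod_proj_act x y (g : Defs.Hom R x y) v : List.In y T ->
  vsproj (submod_space x) (ract X g v) = submod_act g (vsproj (submod_space y) v).
Proof.
move=> Ty; apply: subvs_inj; rewrite submod_actE (submod_proj_id _ Ty).
by rewrite vsprojK // submod_act_closed ?submod_full.
Qed.

Lemma fin_submod (s : seq (Obj R)) :
    (forall t, List.In t T ->
       forall z, (\dim {: Defs.Hom R z t} != 0)%N -> List.In z s) ->
  fin_mod submod.
Proof.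
move=> cover; exists s => z dimz.
have [w gens_w] : exists w, w \in submod_gens z.
  case E: (submod_gens z) => [|w ws]; last by exists w; rewrite mem_head.
  by move: dimz; rewrite /= dim_subvs /submod_space E span_nil dimv0.
have /submod_gensP[t [b [_ [Tt bb _ _]]]] := gens_w; apply: (cover t Tt).
apply: contraTneq bb => dim0.
by have /size0nil-> : size (vbasis {: Defs.Hom R z t}) = 0%N by rewrite size_tuple.
Qed.

Lemma is_hom_comp_submod_proj (M : Rmod R) (h : forall x, sp submod x -> sp M x) :
    is_hom h ->
    (forall x y, (\dim {: sp M x} != 0)%N -> (\dim {: Defs.Hom R x y} != 0)%N ->
       List.In y T) ->
  is_hom (fun x v => h x (vsproj (submod_space x) v)).
Proof.
move=> [h_lin h_nat] reachT; split=> [x a v w | x y g v].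
  by rewrite linearP h_lin.
have [/eqP Mx0|Mx] := boolP (\dim {: sp M x} == 0)%N; first exact: dim0_all_eq.
have [/eqP Hom0|Homxy] := boolP (\dim {: Defs.Hom R x y} == 0)%N.
  by rewrite (dim0_all_eq g 0 Hom0) act0l linear0 (hom0 (conj h_lin h_nat)) act0l.
by rewrite submod_proj_act; [apply: h_nat | apply: reachT Mx Homxy].
Qed.

End GeneratedSubmodule.

Theorem proposition3p6 (K : closedFieldType) (R : Kcat K)
  (HR : locally_bounded R) (X M N : Rmod R)
  (HM : fin_mod M) (HN : fin_mod N)
  (f : forall x, sp M x -> sp N x) (alpha : forall x, sp X x -> sp N x)
  (Hf : is_hom f) (Halpha : is_hom alpha)
  (Hsub : forall (L : Rmod R), fin_mod L ->
     forall gamma : (forall x, sp L x -> sp X x), is_hom gamma ->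
     exists h : (forall x, sp L x -> sp M x), is_hom h /\
       forall x (v : sp L x), alpha x (gamma x v) = f x (h x v)) :
  exists beta : (forall x, sp X x -> sp M x), is_hom beta /\
    forall x (v : sp X x), alpha x v = f x (beta x v).
Proof.
have [[sM suppM] [sN suppN]] := (HM, HN).
have [_ [_ [out_fin in_fin]]] := HR.
have [sMout coverMout] := In_cover_union out_fin sM.
pose T := sN ++ sMout.
have [sTin coverTin] := In_cover_union in_fin T.
have [h [h_hom alpha_fh]] :=
  Hsub _ (fin_submod X coverTin) _ (submod_incl_hom X T).
exists (fun x v => h x (vsproj (submod_space X T x) v)); split.
  apply: is_hom_comp_submod_proj h_hom _ => x y Mx Hxy.
  exact/List.in_or_app/or_intror/(coverMout x (suppM x Mx)).
move=> x v; have [/eqP Nx0|Nx] := boolP (\dim {: sp N x} == 0)%N.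
  exact: dim0_all_eq.
have Tx : List.In x T by exact/List.in_or_app/or_introl/suppN.
by rewrite -alpha_fh submod_proj_id.
Qed.
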